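(* For integers $n\ge j\ge 1$, \[ \sum_{k=j}^{n}\genfrac{[}{]}{0pt}{}{n+1}{k+1}\genfrac{\{}{\}}{0pt}{}{k}{j}\,k=\binom{n+1}{j}\frac{n!}{(j-1)!}\left(H_{n+1}-H_{j}\right). \]
   Context: $\genfrac{\{}{\}}{0pt}{}{n}{k}$ denotes the Stirling numbers of the second kind, $\genfrac{[}{]}{0pt}{}{n}{k}$ the unsigned Stirling numbers of the first kind, and $H_n=\sum_{i=1}^n 1/i$ the harmonic numbers. *)

From mathcomp Require Import all_boot all_order all_algebra.
Set Implicit Arguments. Unset Strict Implicit. Unset Printing Implicit Defensive.
Import GRing.Theory Num.Theory.

Fixpoint stirling1 (n k : nat) : nat :=
  match n, k with
  | 0, 0 => 1
  | 0, _.+1 => 0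
  | _.+1, 0 => 0
  | n'.+1, k'.+1 => n' * stirling1 n' k'.+1 + stirling1 n' k'
  end.

Fixpoint stirling2 (n k : nat) : nat :=
  match n, k with
  | 0, 0 => 1
  | 0, _.+1 => 0
  | _.+1, 0 => 0
  | n'.+1, k'.+1 => k'.+1 * stirling2 n' k'.+1 + stirling2 n' k'
  end.

Definition harmonic (n : nat) : rat := \sum_(1 <= i < n.+1) (i%:R)^-1.

From mathcomp Require Import all_boot all_order all_algebra.
From mathcomp Require Import ring zify.
Import GRing.Theory Num.Theory.

(* With A(n,j) = sum_k [n+1,k+1]{k,j} and T(n,j) = sum_k [n+1,k+1]{k,j} k, the
   triangle recurrences of both kinds of Stirling numbers give
     A(n+1,i+1) = (n+i+2) A(n,i+1) + A(n,i),
     T(n+1,i+1) = (n+i+2) T(n,i+1) + T(n,i) + (i+1) A(n,i+1) + A(n,i).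
   Induction on n then yields A(n,j) = C(n,j) n!/j! and
   T(n,j) = j C(n+1,j) n!/j! (H_(n+1) - H_j); the factor j makes the latter
   valid for j = 0 as well.  Each inductive step becomes a rational identity
   once every binomial coefficient is expressed through C(n+1,i). *)

Lemma stirling1S n k : stirling1 n.+1 k.+1 = n * stirling1 n k.+1 + stirling1 n k.
Proof. by []. Qed.

Lemma stirling2S n k : stirling2 n.+1 k.+1 = k.+1 * stirling2 n k.+1 + stirling2 n k.
Proof. by []. Qed.

Lemma stirling1S0 n : stirling1 n.+1 0 = 0.
Proof. by []. Qed.

Lemma stirling2S0 n : stirling2 n.+1 0 = 0.
Proof. by []. Qed.

Lemma stirling1_small n k : n < k -> stirling1 n k = 0.
Proof. by elim: n k => [|n IHn] [|k] //= ltnk; rewrite !IHn ?muln0 // ltnW. Qed.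

Lemma stirling2_small n k : n < k -> stirling2 n k = 0.
Proof. by elim: n k => [|n IHn] [|k] //= ltnk; rewrite !IHn ?muln0 // ltnW. Qed.

Arguments stirling1 : simpl never.
Arguments stirling2 : simpl never.

Lemma sum_stirling1S n (g : nat -> nat) :
  \sum_(k < n.+2) stirling1 n.+2 k.+1 * g k
  = n.+1 * \sum_(k < n.+1) stirling1 n.+1 k.+1 * g k
    + \sum_(k < n.+1) stirling1 n.+1 k.+1 * g k.+1.
Proof.
under eq_bigr => k _ do rewrite stirling1S mulnDl -mulnA.
rewrite big_split /= big_distrr /=; congr (_ + _).
  by rewrite big_ord_recr /= stirling1_small // muln0 addn0.
by rewrite big_ord_recl /= stirling1S0.
Qed.

Definition stirling_sum n j := \sum_(k < n.+1) stirling1 n.+1 k.+1 * stirling2 k j.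

Definition stirling_ksum n j :=
  \sum_(k < n.+1) stirling1 n.+1 k.+1 * stirling2 k j * k.

Lemma stirling_sumS0 n : stirling_sum n.+1 0 = n.+1 * stirling_sum n 0.
Proof.
rewrite /stirling_sum (sum_stirling1S n (stirling2^~ 0)).
by rewrite [X in _ + X]big1 ?addn0 // => k _; rewrite stirling2S0 muln0.
Qed.

Lemma stirling_sumSS n i :
  stirling_sum n.+1 i.+1 = (n + i).+2 * stirling_sum n i.+1 + stirling_sum n i.
Proof.
rewrite /stirling_sum (sum_stirling1S n (stirling2^~ i.+1)).
under [X in _ + X]eq_bigr => k _ do rewrite stirling2S mulnDr mulnCA.
by rewrite big_split /= -big_distrr addnA -mulnDl addSn addnS.
Qed.

Lemma stirling_ksum0 n : stirling_ksum n 0 = 0.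
Proof.
by rewrite /stirling_ksum big1 // => -[[|k] ?] _; rewrite ?muln0 ?stirling2S0 ?muln0.
Qed.

Lemma stirling_ksumSS n i :
  stirling_ksum n.+1 i.+1
  = (n + i).+2 * stirling_ksum n i.+1 + stirling_ksum n i
    + i.+1 * stirling_sum n i.+1 + stirling_sum n i.
Proof.
rewrite /stirling_ksum /stirling_sum.
under eq_bigr => k _ do rewrite -mulnA.
rewrite (sum_stirling1S n (fun k => stirling2 k i.+1 * k)) !big_distrr /=.
rewrite -!big_split /=; apply: eq_bigr => k _.
by rewrite stirling2S; ring.
Qed.

Lemma stirling_ksumE n j : j <= n.+1 ->
  stirling_ksum n j = \sum_(j <= k < n.+1) stirling1 n.+1 k.+1 * stirling2 k j * k.
Proof.
move=> lejn; rewrite /stirling_ksum.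
rewrite -(big_mkord xpredT (fun k => stirling1 n.+1 k.+1 * stirling2 k j * k)).
rewrite (big_cat_nat (leq0n j) lejn) /= big_nat_cond big1 // => k.
by case/andP=> /andP[_ ltkj] _; rewrite stirling2_small // muln0 mul0n.
Qed.

Lemma mul_bin_left_add n m : m.+1 * 'C(n, m.+1) + m * 'C(n, m) = n * 'C(n, m).
Proof.
rewrite mul_bin_left; case: (leqP m n) => [lemn | ltnm]; first by rewrite -mulnDl subnK.
by rewrite bin_small // !muln0.
Qed.

Lemma mul_bin_down_add n m : n * 'C(n.-1, m) + m * 'C(n, m) = n * 'C(n, m).
Proof.
rewrite mul_bin_down; case: (leqP m n) => [lemn | ltnm]; first by rewrite -mulnDl subnK.
by rewrite bin_small // !muln0.
Qed.

Lemma stirling_sum_fact n j : stirling_sum n j * j`! = 'C(n, j) * n`!.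
Proof.
elim: n j => [|n IHn] [|i].
- by rewrite /stirling_sum big_ord1; apply: erefl.
- by rewrite /stirling_sum big_ord1 stirling2_small.
- by rewrite stirling_sumS0 -mulnA IHn !bin0 !mul1n factS.
rewrite stirling_sumSS mulnDl -mulnA IHn [i.+1`!]factS.
rewrite [stirling_sum n i * _]mulnCA IHn binS factS !mulnA -mulnDl.
by congr (_ * _); have := mul_bin_left_add n i; nia.
Qed.

Local Open Scope ring_scope.

Lemma natr_fact_neq0 (R : numDomainType) n : n`!%:R != 0 :> R.
Proof. by rewrite pnatr_eq0 -lt0n fact_gt0. Qed.

Lemma natr_bin_lower_ratio (R : numFieldType) n m :
  'C(n, m.+1)%:R = (n%:R - m%:R) / m.+1%:R * 'C(n, m)%:R :> R.
Proof.
have /(congr1 (GRing.natmul (1 : R))) := mul_bin_left_add n m.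
rewrite natrD !natrM => rel; rewrite mulrAC mulrBl -rel.
by field; rewrite nat1r pnatr_eq0.
Qed.

Lemma natr_bin_upper_ratio (R : numFieldType) n m :
  'C(n, m)%:R = (n.+1%:R - m%:R) / n.+1%:R * 'C(n.+1, m)%:R :> R.
Proof.
have /(congr1 (GRing.natmul (1 : R))) := mul_bin_down_add n.+1 m.
rewrite natrD !natrM => rel; rewrite mulrAC mulrBl -rel.
by field; rewrite nat1r pnatr_eq0.
Qed.

Lemma natr_stirling_sum (R : numFieldType) n j :
  (stirling_sum n j)%:R = 'C(n, j)%:R * (n`!%:R / j`!%:R) :> R.
Proof.
apply: (mulIf (natr_fact_neq0 R j)).
by rewrite -natrM stirling_sum_fact natrM mulrA mulfVK ?natr_fact_neq0.
Qed.

Lemma harmonicS n : harmonic n.+1 = harmonic n + n.+1%:R^-1.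
Proof. by rewrite /harmonic big_nat_recr. Qed.

Lemma natr_stirling_ksum n j :
  (stirling_ksum n j)%:R
  = j%:R * 'C(n.+1, j)%:R * (n`!%:R / j`!%:R) * (harmonic n.+1 - harmonic j) :> rat.
Proof.
elim: n j => [|n IHn] [|i]; try by rewrite stirling_ksum0 !mul0r.
  rewrite /stirling_ksum big_ord1 muln0.
  case: i => [|i]; first by rewrite subrr mulr0.
  by rewrite bin_small // mulr0n mulr0 !mul0r.
(* [natrD] also matches binomials and successors up to conversion, hence the
   explicit occurrence counts and instances. *)
rewrite stirling_ksumSS 3!natrD 2!natrM !IHn !natr_stirling_sum.
rewrite (harmonicS n.+1) (harmonicS i) !factS !natrM.
rewrite (binS n.+1 i) (natrD _ 'C(n.+1, i.+1)).
rewrite !natr_bin_lower_ratio (natr_bin_upper_ratio _ n i).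
rewrite -!natr1 !natrD.
by field; rewrite !natr1 natr_fact_neq0 !pnatr_eq0.
Qed.

Theorem theorem3 (n j : nat) (hj : (1 <= j)%N) (hjn : (j <= n)%N) :
  \sum_(j <= k < n.+1) ((stirling1 n.+1 k.+1 * stirling2 k j * k)%N)%:R
  = ('C(n.+1, j))%:R * ((n`!)%:R / ((j.-1)`!)%:R) * (harmonic n.+1 - harmonic j)
    :> rat.
Proof.
rewrite -natr_sum -stirling_ksumE ?leqW // natr_stirling_ksum.
case: j hj hjn => // j _ _; rewrite factS natrM.
by field; rewrite natr_fact_neq0 nat1r pnatr_eq0.
Qed.
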